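(* Let $\mathcal A$ be a transitive Lie algebroid over $M$ with kernel $\mathcal L$ and let $\widehat g$ be an inner non-degenerate metric on $\mathcal A$. Then there exists a unique ordinary connection $\nabla^{\widehat g}$ on $\mathcal A$ such that $\widehat g(\nabla^{\widehat g}_X,\iota(\gamma))=0$ for all $X\in\Gamma(TM)$ and all $\gamma\in\mathcal L$.
   Context: A transitive Lie algebroid over $M$ is a finitely generated projective $C^\infty(M)$-module $\mathcal A$ with a Lie bracket and a surjective $C^\infty(M)$-linear Lie morphism $\rho:\mathcal A\to\Gamma(TM)$ with $[X,fY]=f[X,Y]+(\rho(X)f)Y$; its kernel $\mathcal L=\ker\rho$ is the space of sections of a vector bundle $\mathbb L$ (a locally trivial bundle of Lie algebras), and $\iota:\mathcal L\to\mathcal A$ is the inclusion. A metric on $\mathcal A$ is a symmetric $C^\infty(M)$-bilinear map $\widehat g:\mathcal A\otimes_{C^\infty(M)}\mathcal A\to C^\infty(M)$ (not assumed non-degenerate). It is inner non-degenerate if $h(\gamma,\eta)=\widehat g(\iota\gamma,\iota\eta)$ is a non-degenerate metric on the vector bundle $\mathbb L$. An ordinary connection is a $C^\infty(M)$-linear map $\nabla:\Gamma(TM)\to\mathcal A$ with $\rho\circ\nabla=\mathrm{id}$. *)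

(* Algebraic (Serre--Swan) rendering of transitive Lie
   algebroids: the ring R plays the role of C^oo(M), the R-module X the role
   of Gamma(TM) (acting on R by derivations D), A the algebroid. *)
From HB Require Import structures.
From mathcomp Require Import all_boot all_order all_algebra.
Set Implicit Arguments. Unset Strict Implicit. Unset Printing Implicit Defensive.
Import GRing.Theory.
Local Open Scope ring_scope.

Definition Rlinear (R : comPzRingType) (U V : lmodType R) (f : U -> V) : Prop :=
  forall (r : R) (u v : U), f (r *: u + v) = r *: f u + f v.

Definition fg_projective (R : comPzRingType) (U : lmodType R) : Prop :=
  exists (n : nat) (i : U -> 'rV[R]_n) (p : 'rV[R]_n -> U),
    Rlinear i /\ Rlinear p /\ (forall u, p (i u) = u).

Definition lie_bracket (V : zmodType) (br : V -> V -> V) : Prop :=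
  (forall x y z, br (x + y) z = br x z + br y z) /\
      (forall x y z, br x (y + z) = br x y + br x z) /\
      (forall x, br x x = 0) /\
      (forall x y z, br x (br y z) + br y (br z x) + br z (br x y) = 0).

Definition vector_fields (R : comPzRingType) (X : lmodType R)
    (brX : X -> X -> X) (D : X -> R -> R) : Prop :=
  fg_projective X /\
  lie_bracket brX /\
  (forall (f : R) (x y : X), D (f *: x + y) = (fun h => f * D x h + D y h)) /\
  (forall x f h, D x (f + h) = D x f + D x h) /\
  (forall x f h, D x (f * h) = f * D x h + h * D x f) /\
  (forall x y f, D (brX x y) f = D x (D y f) - D y (D x f)) /\
  (forall x y (f : R), brX x (f *: y) = f *: brX x y + D x f *: y).

Definition transitive_Lie_algebroid (R : comPzRingType) (X A : lmodType R)
    (brX : X -> X -> X) (D : X -> R -> R)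
    (brA : A -> A -> A) (rho : A -> X) : Prop :=
  vector_fields brX D /\
  fg_projective A /\
  lie_bracket brA /\
  Rlinear rho /\
  (forall x : X, exists a : A, rho a = x) /\
  (forall a b, rho (brA a b) = brX (rho a) (rho b)) /\
  (forall a b (f : R), brA a (f *: b) = f *: brA a b + D (rho a) f *: b).

(* the kernel L = ker rho, as a predicate on A (iota is the inclusion) *)
Definition in_kernel (R : comPzRingType) (X A : lmodType R) (rho : A -> X)
  (a : A) : Prop := rho a = 0.

Definition metric (R : comPzRingType) (A : lmodType R) (g : A -> A -> R) : Prop :=
  (forall a b, g a b = g b a) /\ (forall b, Rlinear (fun a : A => (g a b : R^o))).

(* inner non-degenerate: h = g restricted to L is non-degenerate, i.e. the
   map L -> Hom_R(L, R), gamma |-> h(gamma, .), is bijective *)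
Definition inner_nondegenerate (R : comPzRingType) (X A : lmodType R)
    (rho : A -> X) (g : A -> A -> R) : Prop :=
  (forall gam, in_kernel rho gam ->
     (forall eta, in_kernel rho eta -> g gam eta = 0) -> gam = 0)
  /\ (forall phi : A -> R,
        (forall (r : R) eta eta', in_kernel rho eta -> in_kernel rho eta' ->
           phi (r *: eta + eta') = r * phi eta + phi eta') ->
        exists2 gam, in_kernel rho gam &
          forall eta, in_kernel rho eta -> g gam eta = phi eta).

Definition ordinary_connection (R : comPzRingType) (X A : lmodType R)
    (rho : A -> X) (nabla : X -> A) : Prop :=
  Rlinear nabla /\ (forall x, rho (nabla x) = x).

From Stdlib Require Import ClassicalEpsilon FunctionalExtensionality.
From HB Require Import structures.
From mathcomp Require Import all_boot all_order all_algebra.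
Local Open Scope ring_scope.
Set Implicit Arguments. Unset Strict Implicit. Unset Printing Implicit Defensive.
Import GRing.Theory.

(* The ordinary connection sends x to the unique lift of x that is
   g-orthogonal to the kernel L.  Such a lift exists because, starting from
   any lift a, the functional g(a, .) on L is represented by some gam in L,
   and a - gam is orthogonal to L; it is unique because the difference of
   two such lifts lies in L and is orthogonal to L, hence vanishes by
   non-degeneracy.  Uniqueness of the lift also forces R-linearity. *)

Lemma Rlinear_sub (R : comPzRingType) (U V : lmodType R) (f : U -> V) :
  Rlinear f -> forall u v, f (u - v) = f u - f v.
Proof.
move=> f_lin u v.
have := f_lin (-1) v u; rewrite !scaleN1r => f_Nvu.
by rewrite addrC f_Nvu addrC.
Qed.

Section OrthogonalLift.

Variables (R : comPzRingType) (X A : lmodType R).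
Variables (rho : A -> X) (g : A -> A -> R).
Hypothesis rho_lin : Rlinear rho.
Hypothesis g_metric : metric g.
Hypothesis g_nondeg : inner_nondegenerate rho g.

Definition orthogonal_to_kernel (a : A) : Prop :=
  forall gam, in_kernel rho gam -> g a gam = 0.

Lemma metric_subl a a' b : g (a - a') b = g a b - g a' b.
Proof. by have := Rlinear_sub (g_metric.2 b) a a'. Qed.

Lemma orthogonal_to_kernel_lin r a b :
  orthogonal_to_kernel a -> orthogonal_to_kernel b ->
  orthogonal_to_kernel (r *: a + b).
Proof.
move=> a_orth b_orth gam gam_ker.
have := g_metric.2 gam r a b; rewrite /= => ->.
by rewrite a_orth // b_orth // scaler0 addr0.
Qed.

Lemma orthogonal_lift_unique a b :
  rho a = rho b -> orthogonal_to_kernel a -> orthogonal_to_kernel b -> a = b.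
Proof.
move=> rho_ab a_orth b_orth; apply/eqP; rewrite -subr_eq0; apply/eqP.
apply: g_nondeg.1 => [|eta eta_ker].
  by rewrite /in_kernel (Rlinear_sub rho_lin) rho_ab subrr.
by rewrite metric_subl a_orth // b_orth // subrr.
Qed.

Lemma orthogonal_lift_exists a :
  exists b, rho b = rho a /\ orthogonal_to_kernel b.
Proof.
have [|gam gam_ker g_gam] := g_nondeg.2 (fun eta => g a eta).
  move=> r eta eta' _ _.
  by rewrite g_metric.1 (g_metric.2 a) /= g_metric.1 [g eta' a]g_metric.1.
exists (a - gam); split.
  by rewrite (Rlinear_sub rho_lin) gam_ker subr0.
by move=> eta eta_ker; rewrite metric_subl g_gam // subrr.
Qed.

End OrthogonalLift.

Theorem proposition2p6 (R : comPzRingType) (X A : lmodType R)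
    (brX : X -> X -> X) (D : X -> R -> R)
    (brA : A -> A -> A) (rho : A -> X) (g : A -> A -> R) :
  transitive_Lie_algebroid brX D brA rho ->
  metric g ->
  inner_nondegenerate rho g ->
  exists! nabla : X -> A,
    ordinary_connection rho nabla /\
    (forall (x : X) (gam : A), in_kernel rho gam -> g (nabla x) gam = 0).
Proof.
move=> [_ [_ [_ [rho_lin [rho_surj _]]]]] g_metric g_nondeg.
have lift x : exists b, rho b = x /\ orthogonal_to_kernel rho g b.
  have [a <-] := rho_surj x; exact: orthogonal_lift_exists.
pose nabla x := proj1_sig (constructive_indefinite_description _ (lift x)).
have [rho_nabla nabla_orth] : (forall x, rho (nabla x) = x) /\
    (forall x, orthogonal_to_kernel rho g (nabla x)).
  by split=> x; rewrite /nabla; case: constructive_indefinite_description => ? [].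
exists nabla; split.
  split=> //; split=> // r x y.
  apply: (orthogonal_lift_unique rho_lin g_metric g_nondeg).
  - by rewrite rho_lin !rho_nabla.
  - exact: nabla_orth.
  - exact: orthogonal_to_kernel_lin.
move=> nabla' [[_ rho_nabla'] nabla'_orth]; apply: functional_extensionality => x.
apply: (orthogonal_lift_unique rho_lin g_metric g_nondeg) (nabla_orth x) _.
  by rewrite rho_nabla rho_nabla'.
exact: nabla'_orth.
Qed.
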